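(* There exists a polyhedral complex $\mathcal C$ of $\mathbb R^{n(n+1)/2}$ with support $\widetilde{K}$, such that the image by $\Phi$ of the set of matrices $A \in {\operatorname{\mathsf{TPD}}}_n(\mathbb{S}_{\max}^{\vee})$ such that all the eigenvalues of $A$ are simple and all the vectors $v^{(k)}$ are in $(\mathbb{S}_{\max}^{\vee}\setminus\{\mathbf{0}\})^n$ contains all the interiors of cells of maximal dimension of $\mathcal C$.
   Context: Here $\Gamma=\mathbb R$ and $\mathbb{S}_{\max}=\mathbb{S}_{\max}(\mathbb R)$ is the symmetrized tropical semiring, with zero $\mathbf{0}$, unit $\mathbf{1}$, minus $\ominus$, modulus $|\cdot|$ with values in $\mathbb{R}_{\max}=\mathbb R\cup\{-\infty\}$; $\mathbb{S}_{\max}^\vee$ is the set of signed elements. $A\in{\operatorname{\mathsf{TPD}}}_n(\mathbb{S}_{\max}^\vee)$: $A=(a_{ij})$ symmetric with signed entries, $\mathbf{0}<a_{ii}$ and $a_{ij}^2<a_{ii}a_{jj}$ for $i\ne j$. $\Psi(A)=(a_{ij})_{1\le i\le j\le n}$, $\mu$ applies the modulus entrywise, $\Phi=\mu\circ\Psi$, $K=\Phi({\operatorname{\mathsf{TPD}}}_n(\mathbb{S}_{\max}^\vee))$, and $\widetilde K$ is the closure in $\mathbb R^{n(n+1)/2}$ of $K\cap\mathbb R^{n(n+1)/2}=\{x: 2x_{ij}<x_{ii}+x_{jj}\ \forall i<j\}$, a convex polyhedron of dimension $n(n+1)/2$. The $\mathbb{S}_{\max}$-eigenvalues of $A$ are its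 diagonal entries $\gamma_k=a_{kk}$; after reindexing so that $\gamma_1\succeq\cdots\succeq\gamma_n$, $v^{(k)}=(\gamma_k I\ominus A)^{\mathrm{adj}}_{:,k}$. A polyhedral complex is a collection of polyhedra (cells) any two of which intersect in a common face or not at all; its support is the union of its cells. *)

From HB Require Import structures.
From mathcomp Require Import all_boot all_order all_algebra all_fingroup.
From mathcomp Require Import reals.
Set Implicit Arguments. Unset Strict Implicit. Unset Printing Implicit Defensive.
Import Order.TTheory GRing.Theory Num.Theory.
Local Open Scope ring_scope.

Section Smax.
Variable R : realType.

(* sign tags: positive a, negative (ominus a), balanced a^bullet *)
Inductive stag := SPlus | SMinus | SBal.

Definition stag_eqb (s t : stag) : bool :=
  match s, t with
  | SPlus, SPlus | SMinus, SMinus | SBal, SBal => true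
  | _, _ => false end.

Definition stag_mul (s t : stag) : stag :=
  match s, t with
  | SBal, _ | _, SBal => SBal
  | SPlus, u | u, SPlus => u
  | SMinus, SMinus => SPlus end.

Definition stag_opp (s : stag) : stag :=
  match s with SPlus => SMinus | SMinus => SPlus | SBal => SBal end.

(* SZero = the zero 0 (modulus -oo); SElt s a has modulus a in R *)
Inductive Smax := SZero | SElt of stag & R.

(* modulus |.| with values in R_max = R u {-oo}; None stands for -oo *)
Definition smod (x : Smax) : option R :=
  match x with SZero => None | SElt _ a => Some a end.

Definition sone : Smax := SElt SPlus 0.

Definition sadd (x y : Smax) : Smax :=
  match x, y with
  | SZero, _ => y
  | _, SZero => x
  | SElt s a, SElt t b =>
      if a < b then y else if b < a then x
      else SElt (if stag_eqb s t then s else SBal) a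
  end.

Definition smul (x y : Smax) : Smax :=
  match x, y with
  | SZero, _ | _, SZero => SZero
  | SElt s a, SElt t b => SElt (stag_mul s t) (a + b)
  end.

Definition sopp (x : Smax) : Smax :=
  match x with SZero => SZero | SElt s a => SElt (stag_opp s) a end.

Definition ssigned (x : Smax) : Prop :=
  match x with SZero => True | SElt SBal _ => False | SElt _ _ => True end.

Definition ssigned_nz (x : Smax) : Prop :=
  match x with SZero => False | SElt SBal _ => False | SElt _ _ => True end.

Definition slt (a b : Smax) : Prop :=
  match sadd b (sopp a) with SElt SPlus _ => True | _ => False end.

Definition sle (a b : Smax) : Prop :=
  match sadd b (sopp a) with SElt SMinus _ => False | _ => True end.

Definition ssign_pow (k : nat) : Smax := if odd k then sopp sone else sone.

Definition sdet (m : nat) (M : 'M[Smax]_m) : Smax :=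
  \big[sadd/SZero]_(sigma : 'S_m)
     smul (ssign_pow (odd_perm sigma)) (\big[smul/sone]_(i < m) M i (sigma i)).

Definition sadj (m : nat) (M : 'M[Smax]_m) : 'M[Smax]_m :=
  \matrix_(i, j) smul (ssign_pow (i + j)) (sdet (row' j (col' i M))).

Definition sshift (m : nat) (g : Smax) (A : 'M[Smax]_m) : 'M[Smax]_m :=
  \matrix_(i, j) sadd (if i == j then g else SZero) (sopp (A i j)).

Definition TPD (n : nat) (A : 'M[Smax]_n) : Prop :=
  (forall i j, A i j = A j i) /\
  (forall i j, ssigned (A i j)) /\
  (forall i, slt SZero (A i i)) /\
  (forall i j, i != j -> slt (smul (A i j) (A i j)) (smul (A i i) (A j j))).

(* The S_max-eigenvalues of a TPD matrix are its diagonal entries;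
   "all eigenvalues simple" = the diagonal entries are pairwise distinct *)
Definition simple_eigs (n : nat) (A : 'M[Smax]_n) : Prop :=
  forall i j : 'I_n, A i i = A j j -> i = j.

(* After reindexing (simultaneous permutation sigma of rows/columns) so that
   gamma_1 >= ... >= gamma_n, v^(k) = column k of adj(gamma_k I (-) A);
   all v^(k) have all their entries in S_max^vee \ {0}. *)
Definition good_eigvecs (n : nat) (A : 'M[Smax]_n) : Prop :=
  forall sigma : 'S_n,
    (forall i j : 'I_n, (i <= j)%N -> sle (A (sigma j) (sigma j)) (A (sigma i) (sigma i))) ->
    let A' := \matrix_(i, j) A (sigma i) (sigma j) in
    forall k i : 'I_n, ssigned_nz (sadj (sshift (A' k k) A') i k).

Definition Idx (n : nat) := {p : 'I_n * 'I_n | (p.1 <= p.2)%N}.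
Definition pt (n : nat) := Idx n -> R.

(* Phi(A) = x (as an element of R^{n(n+1)/2}, all entries finite) *)
Definition Phi_eq (n : nat) (A : 'M[Smax]_n) (x : pt n) : Prop :=
  forall p : Idx n, smod (A (val p).1 (val p).2) = Some (x p).

Definition KR (n : nat) (x : pt n) : Prop := exists A, TPD A /\ Phi_eq A x.

Definition closure (n : nat) (S : pt n -> Prop) (x : pt n) : Prop :=
  forall e : R, 0 < e -> exists y, S y /\ forall p, `|y p - x p| < e.

Definition interior (n : nat) (S : pt n -> Prop) (x : pt n) : Prop :=
  exists2 e : R, 0 < e & forall y, (forall p, `|y p - x p| < e) -> S y.

Definition Ktilde (n : nat) : pt n -> Prop := closure (@KR n).

Definition dot (n : nat) (c x : pt n) : R := \sum_(p : Idx n) c p * x p.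

Definition polyset (n : nat) (H : seq (pt n * R)) (x : pt n) : Prop :=
  all (fun h => dot h.1 x <= h.2) H.

(* F is a face of P (the empty set and P itself included) *)
Definition is_face (n : nat) (F P : pt n -> Prop) : Prop :=
  exists (c : pt n) (d : R), (forall x, P x -> dot c x <= d) /\
    (forall x, F x <-> (P x /\ dot c x = d)).

Definition dim_ge (n : nat) (S : pt n -> Prop) (d : nat) : Prop :=
  exists (p0 : pt n) (v : 'I_d -> pt n),
    S p0 /\ (forall k, S (fun p => p0 p + v k p)) /\
    (forall c : 'I_d -> R, (forall p, \sum_(k < d) c k * v k p = 0) ->
       forall k, c k = 0).

Definition is_complex (n m : nat) (cells : 'I_m -> seq (pt n * R)) : Prop :=
  forall i j : 'I_m,
    is_face (fun x => polyset (cells i) x /\ polyset (cells j) x) (polyset (cells i)) /\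
    is_face (fun x => polyset (cells i) x /\ polyset (cells j) x) (polyset (cells j)).

Definition support_is (n m : nat) (cells : 'I_m -> seq (pt n * R))
    (S : pt n -> Prop) : Prop :=
  forall x, (exists i, polyset (cells i) x) <-> S x.

Definition max_dim_cell (n m : nat) (cells : 'I_m -> seq (pt n * R)) (i : 'I_m) : Prop :=
  forall (j : 'I_m) (d : nat), dim_ge (polyset (cells j)) d -> dim_ge (polyset (cells i)) d.

End Smax.

From HB Require Import structures.
From mathcomp Require Import all_boot all_order all_algebra all_fingroup.
From mathcomp Require Import reals.
From mathcomp Require Import lra.
Set Implicit Arguments. Unset Strict Implicit. Unset Printing Implicit Defensive.
Import Order.TTheory GRing.Theory Num.Theory.
Local Open Scope ring_scope.

(* Take for A the matrix with positive entries of moduli x.  It is in TPD_n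
   exactly when 2 x_ij < x_ii + x_jj, i.e. on the interior of K~.  Cut K~ by the
   finitely many hyperplanes x_ii = x_jj and, for each minor of gamma_k I (-) A,
   "two permutations with different coefficient vectors have the same weight"; the
   sign vectors of these hyperplanes give a polyhedral complex with support K~.
   Off the hyperplanes the eigenvalues are distinct, and the permutations of
   maximal weight in a minor all share their coefficient vector.  Lifted to a
   permutation of [n] sending k to i, such a permutation moves only points of the
   cycle through k: any other cycle could be broken into fixed points with a strict
   gain in weight, because 2 x_ab < x_aa + x_bb.  Its number of cycles, hence its
   sign, is thus read off the coefficient vector, so the maximal terms of the minor
   do not cancel and every entry of v^(k) is signed and nonzero. *)

Section SignedTropical.
Variable R : realType.

(* A sign is encoded by a boolean, [true] meaning negative, so that signs
   multiply by [addb]. *)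
Definition sign_tag (b : bool) : stag := if b then SMinus else SPlus.

Lemma smul_sign_tag (b1 b2 : bool) (a1 a2 : R) :
  smul (SElt (sign_tag b1) a1) (SElt (sign_tag b2) a2) =
  SElt (sign_tag (b1 (+) b2)) (a1 + a2).
Proof. by case: b1; case: b2. Qed.

Lemma big_smul_sign_tag (I : Type) (r : seq I) (P : pred I) (b : I -> bool)
    (a : I -> R) (F : I -> Smax R) :
  (forall i, P i -> F i = SElt (sign_tag (b i)) (a i)) ->
  \big[@smul R/sone R]_(i <- r | P i) F i =
  SElt (sign_tag (odd (\sum_(i <- r | P i) b i))) (\sum_(i <- r | P i) a i).
Proof.
move=> FE; apply: (big_ind3 (fun y (m : nat) c => y = SElt (sign_tag (odd m)) c)) => //.
- by move=> y1 m1 c1 y2 m2 c2 -> ->; rewrite smul_sign_tag oddD.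
- by move=> i Pi; rewrite FE //; case: (b i).
Qed.

Lemma ssign_powE (j : nat) : ssign_pow R j = SElt (sign_tag (odd j)) 0.
Proof. by rewrite /ssign_pow; case: odd. Qed.

Definition smod_lt (y : Smax R) (a : R) : Prop :=
  if y is SElt _ c then c < a else True.

Lemma sadd_smod_lt (a : R) (y z : Smax R) :
  smod_lt y a -> smod_lt z a -> smod_lt (sadd y z) a.
Proof.
case: y => [|s c] //; case: z => [|t d] //= ca da.
by case: ifP => _ //; case: ifP.
Qed.

Lemma sadd_dominant_l (b : bool) (a : R) (y : Smax R) :
  smod_lt y a -> sadd (SElt (sign_tag b) a) y = SElt (sign_tag b) a.
Proof. by case: y => [|t c] //= ca; rewrite ltNge (ltW ca) /= ca. Qed.

Lemma sadd_dominant_r (b : bool) (a : R) (y : Smax R) :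
  smod_lt y a -> sadd y (SElt (sign_tag b) a) = SElt (sign_tag b) a.
Proof. by case: y => [|t c] //= ->. Qed.

Lemma sadd_sign_tag_id (b : bool) (a : R) :
  sadd (SElt (sign_tag b) a) (SElt (sign_tag b) a) = SElt (sign_tag b) a.
Proof. by rewrite /= ltxx; case: b. Qed.

Section Dominant.
Variables (I : eqType) (F : I -> Smax R) (b : bool) (a : R).
Let e := SElt (sign_tag b) a.

Lemma big_sadd_dominant_or_lt (r : seq I) :
  (forall i, i \in r -> F i = e \/ smod_lt (F i) a) ->
  \big[@sadd R/SZero R]_(i <- r) F i = e \/
  smod_lt (\big[@sadd R/SZero R]_(i <- r) F i) a.
Proof.
elim: r => [|j r IH] Fr; first by rewrite big_nil; right.
have Fr' i : i \in r -> F i = e \/ smod_lt (F i) a.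
  by move=> ir; apply: Fr; rewrite inE ir orbT.
rewrite big_cons; have [->|lt_j] := Fr j (mem_head _ _);
  (have [->|lt_r] := IH Fr');
  by [left; exact: sadd_sign_tag_id | left; exact: sadd_dominant_l
     | left; exact: sadd_dominant_r | right; exact: sadd_smod_lt].
Qed.

Lemma big_sadd_dominant (r : seq I) :
  (forall i, i \in r -> F i = e \/ smod_lt (F i) a) ->
  (exists2 i, i \in r & F i = e) ->
  \big[@sadd R/SZero R]_(i <- r) F i = e.
Proof.
elim: r => [|j r IH] Fr [i]; first by [].
have Fr' i' : i' \in r -> F i' = e \/ smod_lt (F i') a.
  by move=> ir; apply: Fr; rewrite inE ir orbT.
rewrite big_cons inE => /orP[/eqP-> ->|ir Fi].
  have [->|lt_r] := big_sadd_dominant_or_lt Fr'.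
    exact: sadd_sign_tag_id.
  exact: sadd_dominant_l.
rewrite IH //; last by exists i.
by have [->|lt_j] := Fr j (mem_head _ _); [exact: sadd_sign_tag_id | exact: sadd_dominant_r].
Qed.

End Dominant.

End SignedTropical.

Section Coordinates.
Variables (R : realType) (n : nat).

Lemma sympair_subproof (u v : 'I_n) :
  let p := if (u <= v)%N then (u, v) else (v, u) in (p.1 <= p.2)%N.
Proof. by case: (leqP u v) => //= /ltnW. Qed.

Definition sympair (u v : 'I_n) : Idx n :=
  exist (fun p : 'I_n * 'I_n => (p.1 <= p.2)%N) _ (sympair_subproof u v).

Lemma sympair_val (p : Idx n) : sympair (val p).1 (val p).2 = p.
Proof. by apply: val_inj; case: p => [[u v] /= ->]. Qed.

Lemma sympairE (u v : 'I_n) : (u <= v)%N -> val (sympair u v) = (u, v).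
Proof. by move=> /= ->. Qed.

Lemma sympairC (u v : 'I_n) : sympair u v = sympair v u.
Proof.
by apply: val_inj => /=; case: (ltngtP u v) => // /val_inj ->.
Qed.

Lemma sympair_inj (u v u' v' : 'I_n) : sympair u v = sympair u' v' ->
  (u = u' /\ v = v') \/ (u = v' /\ v = u').
Proof. by move/(congr1 val) => /=; do 2 case: leqP => _; case=> -> ->; tauto. Qed.

Definition is_diag (p : Idx n) : bool := (val p).1 == (val p).2.

Lemma is_diag_sympair (u v : 'I_n) : is_diag (sympair u v) = (u == v).
Proof. by rewrite /is_diag /=; case: leqP => _ //=; rewrite eq_sym. Qed.

Definition diag1 (p : Idx n) : Idx n := sympair (val p).1 (val p).1.
Definition diag2 (p : Idx n) : Idx n := sympair (val p).2 (val p).2.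

Lemma diag12_sympair (x : pt R n) (u v : 'I_n) :
  x (diag1 (sympair u v)) + x (diag2 (sympair u v)) =
  x (sympair u u) + x (sympair v v).
Proof. by rewrite /diag1 /diag2 /=; case: leqP => _ //=; rewrite addrC. Qed.

Lemma diag12_is_diag (x : pt R n) (p : Idx n) : is_diag p ->
  x (diag1 p) + x (diag2 p) = 2 * x p.
Proof.
by move=> /eqP dp; rewrite /diag1 /diag2 -dp -[in RHS](sympair_val p) -dp mulr2n mulrDl mul1r.
Qed.

Lemma diag1_neq (p : Idx n) : ~~ is_diag p -> diag1 p != p.
Proof. by apply: contra => /eqP <-; rewrite is_diag_sympair. Qed.

Lemma diag2_neq (p : Idx n) : ~~ is_diag p -> diag2 p != p.
Proof. by apply: contra => /eqP <-; rewrite is_diag_sympair. Qed.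

Definition Kweak (x : pt R n) : Prop :=
  forall p, 2 * x p <= x (diag1 p) + x (diag2 p).

Definition Kstrict (x : pt R n) : Prop :=
  forall p, ~~ is_diag p -> 2 * x p < x (diag1 p) + x (diag2 p).

Definition pos_mx (x : pt R n) : 'M[Smax R]_n :=
  \matrix_(i, j) SElt SPlus (x (sympair i j)).

Lemma slt_sqr_signed (t : stag) (a b c : R) : ssigned (SElt t a) ->
  slt (smul (SElt t a) (SElt t a)) (smul (SElt SPlus b) (SElt SPlus c)) ->
  2 * a < b + c.
Proof. by rewrite mulr2n mulrDl mul1r /slt; case: t => //= _; case: ltgtP. Qed.

Lemma slt_sqr_pos (a b c : R) : 2 * a < b + c ->
  slt (smul (SElt SPlus a) (SElt SPlus a)) (smul (SElt SPlus b) (SElt SPlus c)).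
Proof.
rewrite mulr2n mulrDl mul1r /slt /= => lt_abc.
by rewrite lt_abc ltNge (ltW lt_abc).
Qed.

Lemma slt0_pos (y : Smax R) : slt (SZero R) y -> exists a, y = SElt SPlus a.
Proof. by case: y => [|[] a] //; exists a. Qed.

Lemma KR_Kstrict (x : pt R n) : KR x -> Kstrict x.
Proof.
case=> A [[_ [Asg [Apos Aoff]]] Ax] p ndp.
have Adiag (u : 'I_n) : A u u = SElt SPlus (x (sympair u u)).
  have [a Aa] := slt0_pos (Apos u).
  by have := Ax (sympair u u); rewrite sympairE //= Aa => -[->].
have := Aoff _ _ ndp; have := Asg (val p).1 (val p).2; have := Ax p.
rewrite !Adiag -diag12_sympair !sympair_val.
by case: (A _ _) => // t a [<-]; exact: slt_sqr_signed.
Qed.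

Lemma TPD_pos_mx (x : pt R n) : Kstrict x -> TPD (pos_mx x).
Proof.
move=> xK; split; first by move=> i j; rewrite !mxE sympairC.
split; first by move=> i j; rewrite mxE.
split; first by move=> i; rewrite mxE.
move=> i j ij; rewrite !mxE; apply: slt_sqr_pos.
by rewrite -diag12_sympair; apply: xK; rewrite is_diag_sympair.
Qed.

Lemma Phi_pos_mx (x : pt R n) : Phi_eq (pos_mx x) x.
Proof. by move=> p; rewrite mxE sympair_val. Qed.

Lemma Kstrict_KR (x : pt R n) : Kstrict x -> KR x.
Proof. by move=> xK; exists (pos_mx x); split; [exact: TPD_pos_mx | exact: Phi_pos_mx]. Qed.

Lemma Ktilde_Kweak (x : pt R n) : Ktilde x -> Kweak x.
Proof.
move=> xcl p; have [dp|ndp] := boolP (is_diag p); first by rewrite diag12_is_diag.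
rewrite leNgt; apply/negP => lt_p.
pose d := 2 * x p - (x (diag1 p) + x (diag2 p)).
have [|y [/KR_Kstrict yK xy]] := xcl (d / 4); first by rewrite divr_gt0 // subr_gt0.
have := yK _ ndp; have := xy p; have := xy (diag1 p); have := xy (diag2 p).
by rewrite !ltr_norml /d => /andP[? ?] /andP[? ?] /andP[? ?]; lra.
Qed.

Lemma Kweak_Ktilde (x : pt R n) : Kweak x -> Ktilde x.
Proof.
move=> xK e e_gt0; exists (fun q => x q + (if is_diag q then e / 2 else 0)); split.
  apply: Kstrict_KR => p ndp /=; rewrite (negbTE ndp) /diag1 /diag2 !is_diag_sympair !eqxx.
  by have := xK p; lra.
move=> p /=; rewrite addrC addKr; case: ifP => _; last by rewrite normr0.
by rewrite ger0_norm; lra.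
Qed.

Lemma KtildeE (x : pt R n) : Ktilde x <-> Kweak x.
Proof. by split; [exact: Ktilde_Kweak | exact: Kweak_Ktilde]. Qed.

End Coordinates.

Section LinearForms.
Variables (R : realType) (n : nat).
Implicit Types (l x : pt R n) (p : Idx n).

Lemma sum_coord p (f : Idx n -> R) : \sum_q (q == p)%:R * f q = f p.
Proof.
by rewrite (bigD1 p) //= eqxx mul1r big1 ?addr0 // => q /negbTE ->; rewrite mul0r.
Qed.

Lemma dot_coord p x : dot (fun q => (q == p)%:R) x = x p.
Proof. exact: sum_coord. Qed.

Lemma dotBl l1 l2 x : dot (fun q => l1 q - l2 q) x = dot l1 x - dot l2 x.
Proof. by rewrite /dot -sumrB; apply: eq_bigr => q _; rewrite mulrBl. Qed.

Lemma dot_suml (J : finType) (P : pred J) (l : J -> pt R n) x :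
  dot (fun q => \sum_(j | P j) l j q) x = \sum_(j | P j) dot (l j) x.
Proof.
by rewrite /dot; under eq_bigr do rewrite mulr_suml; rewrite exchange_big.
Qed.

Lemma dot_perturb l x p (c : R) :
  dot l (fun q => x q + (if q == p then c else 0)) = dot l x + c * l p.
Proof.
rewrite /dot; under eq_bigr do rewrite mulrDr; rewrite big_split /=; congr (_ + _).
rewrite (bigD1 p) //= eqxx big1 ?addr0 ?[_ * c]mulrC // => q /negbTE ->.
by rewrite mulr0.
Qed.

Lemma interior_perturb (P : pt R n -> Prop) x : interior P x ->
  exists2 e : R, 0 < e &
    forall p (c : R), `|c| < e -> P (fun q => x q + (if q == p then c else 0)).
Proof.
case=> e e_gt0 xP; exists e => // p c ce; apply: xP => q.
by rewrite addrC addKr; case: ifP; rewrite ?normr0.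
Qed.

Definition Kform p : pt R n :=
  fun q => 2 * (q == p)%:R - ((q == diag1 p)%:R + (q == diag2 p)%:R).

Lemma dot_Kform p x : dot (Kform p) x = 2 * x p - (x (diag1 p) + x (diag2 p)).
Proof.
rewrite dotBl -!dot_coord; congr (_ - _).
  by rewrite /dot mulr_sumr; apply: eq_bigr => q _; rewrite mulrA.
by rewrite /dot -big_split; apply: eq_bigr => q _; rewrite mulrDl.
Qed.

Definition signed_form (b : bool) l : pt R n := fun q => if b then l q else - l q.

Lemma dot_signed_form b l x :
  dot (signed_form b l) x = if b then dot l x else - dot l x.
Proof.
case: b => //; rewrite /dot -sumrN.
by apply: eq_bigr => q _; rewrite mulNr.
Qed.

End LinearForms.

Arguments Kform {R n}.

Section Arrangement.
Variables (R : realType) (n : nat) (J : finType) (G : J -> pt R n).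

Definition arr_cell (b : {ffun J -> bool}) : seq (pt R n * R) :=
  [seq (Kform p, 0) | p <- index_enum (Idx n)] ++
  [seq (signed_form (b j) (G j), 0) | j <- index_enum J].

Definition in_arr_cell (b : {ffun J -> bool}) (x : pt R n) : Prop :=
  Kweak x /\ forall j, dot (signed_form (b j) (G j)) x <= 0.

Lemma polyset_arr_cell b x : polyset (arr_cell b) x <-> in_arr_cell b x.
Proof.
rewrite /polyset /arr_cell all_cat !all_map; split.
- case/andP=> /allP xK /allP xG; split=> [p|j].
    by have := xK p (mem_index_enum p); rewrite /= dot_Kform subr_le0.
  exact: xG (mem_index_enum j).
- case=> xK xG; apply/andP; split; apply/allP => z _ //=.
  by rewrite dot_Kform subr_le0.
Qed.

Lemma arr_cell_meet_face (b b' : {ffun J -> bool}) :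
  is_face (fun x => polyset (arr_cell b) x /\ polyset (arr_cell b') x)
          (polyset (arr_cell b)).
Proof.
pose P j := b j != b' j.
exists (fun q => \sum_(j | P j) signed_form (b j) (G j) q), 0.
split=> [x /polyset_arr_cell [_ xG]|x]; rewrite dot_suml.
  exact: sumr_le0.
rewrite !polyset_arr_cell; split.
- case=> [[xK xG] [_ xG']]; split=> //; apply: big1 => j bj.
  have := xG j; have := xG' j; rewrite !dot_signed_form.
  by rewrite /P in bj; case: (b j) (b' j) bj => [] [] // _; lra.
- case=> [[xK xG] sum0]; split=> //; split=> // j.
  have [->|bj] := eqVneq (b' j) (b j); first exact: xG.
  have Gj0 : - dot (signed_form (b j) (G j)) x = 0.
    apply: (psumr_eq0P (P := P) (F := fun i => - dot (signed_form (b i) (G i)) x)).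
    - by move=> i _; rewrite oppr_ge0.
    - by rewrite sumrN sum0 oppr0.
    - by rewrite /P eq_sym.
  move: Gj0; rewrite !dot_signed_form.
  by case: (b j) (b' j) bj => [] [] // _; lra.
Qed.

Definition arr_cells (i : 'I_#|{ffun J -> bool}|) : seq (pt R n * R) :=
  arr_cell (enum_val i).

Lemma arr_cells_complex : is_complex arr_cells.
Proof.
move=> i j; split; first exact: arr_cell_meet_face.
have [c [d [cP cF]]] := arr_cell_meet_face (enum_val j) (enum_val i).
by exists c, d; split=> // x; rewrite -cF; tauto.
Qed.

Lemma arr_cells_support : support_is arr_cells (@Kweak R n).
Proof.
move=> x; split=> [[i /polyset_arr_cell []] //|xK].
exists (enum_rank [ffun j => dot (G j) x <= 0]); apply/polyset_arr_cell.
split=> // j; rewrite enum_rankK ffunE dot_signed_form.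
by case: (leP (dot (G j) x) 0) => // ?; lra.
Qed.

Lemma interior_arr_cell_Kstrict b x : interior (polyset (arr_cell b)) x -> Kstrict x.
Proof.
case/interior_perturb=> e e_gt0 xP p ndp; rewrite ltNge; apply/negP => le_p.
have /polyset_arr_cell [/(_ p) /=] := xP p (e / 2) ltac:(rewrite ger0_norm; lra).
rewrite eqxx (negbTE (diag1_neq ndp)) (negbTE (diag2_neq ndp)) !addr0.
by lra.
Qed.

Lemma interior_arr_cell_generic b x j : interior (polyset (arr_cell b)) x ->
  (exists q, G j q != 0) -> dot (G j) x != 0.
Proof.
case/interior_perturb=> e e_gt0 xP [q Gq]; apply/eqP => Gx.
have side c : `|c| < e -> c * signed_form (b j) (G j) q <= 0.
  move=> ce; have /polyset_arr_cell [_ /(_ j)] := xP q c ce.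
  by rewrite dot_perturb dot_signed_form Gx oppr0 if_same add0r.
have := side (e / 2) ltac:(rewrite ger0_norm; lra).
have := side (- (e / 2)) ltac:(rewrite normrN ger0_norm; lra).
move: Gq; rewrite /signed_form; case: (b j); set g := G j q => g_neq0.
- by case: (ltrgtP g 0) g_neq0 => [g_lt0|g_gt0|->] //= _; nra.
- by case: (ltrgtP g 0) g_neq0 => [g_lt0|g_gt0|->] //= _; nra.
Qed.

End Arrangement.

Section Genericity.
Variables (R : realType) (n : nat).

(* The coordinate carrying the modulus of the entry [(a, b)], [a != k], of
   [gamma_k I (-) A], where [A] is the positive matrix reindexed by [s] in decreasing
   order of its diagonal: on the diagonal the larger of [gamma_k] and [a_aa] wins. *)
Definition shift_coord (s : 'S_n) (k a b : 'I_n) : Idx n :=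
  if a == b then (if (a < k)%N then sympair (s a) (s a) else sympair (s k) (s k))
  else sympair (s a) (s b).

Definition term_coef (s : 'S_n) (k : 'I_n) (t : 'S_n) (q : Idx n) : nat :=
  \sum_(a | a != k) (shift_coord s k a (t a) == q).

Definition term_form (s : 'S_n) (k : 'I_n) (t : 'S_n) : pt R n :=
  fun q => (term_coef s k t q)%:R.

Lemma dot_term_form s k t (x : pt R n) :
  dot (term_form s k t) x = \sum_(a | a != k) x (shift_coord s k a (t a)).
Proof.
rewrite /dot /term_form /term_coef; under eq_bigr do rewrite natr_sum mulr_suml.
rewrite exchange_big; apply: eq_bigr => a _.
by rewrite -(sum_coord (shift_coord s k a (t a))); apply: eq_bigr => q _; rewrite eq_sym.
Qed.

Definition generic_index := (('I_n * 'I_n) + ('S_n * 'I_n * 'S_n * 'S_n))%type.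

Definition generic_form (j : generic_index) : pt R n :=
  match j with
  | inl (u, v) => fun q => (q == sympair u u)%:R - (q == sympair v v)%:R
  | inr (s, k, t1, t2) => fun q => term_form s k t1 q - term_form s k t2 q
  end.

Definition generic (x : pt R n) : Prop :=
  forall j, (exists q, generic_form j q != 0) -> dot (generic_form j) x != 0.

Lemma generic_diag_inj (x : pt R n) (u v : 'I_n) :
  generic x -> x (sympair u u) = x (sympair v v) -> u = v.
Proof.
move=> xgen xuv; apply/eqP/negP => /negP uv.
suff : dot (generic_form (inl (u, v))) x != 0.
  by rewrite /= dotBl !dot_coord xuv subrr eqxx.
apply: xgen; exists (sympair u u); rewrite /= eqxx.
case: (sympair u u =P sympair v v) => [/sympair_inj [] [e _]|_]; last by rewrite subr0 oner_neq0.
all: by rewrite e eqxx in uv.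
Qed.

Lemma generic_term_coef (x : pt R n) s k (t1 t2 : 'S_n) : generic x ->
  \sum_(a | a != k) x (shift_coord s k a (t1 a)) =
  \sum_(a | a != k) x (shift_coord s k a (t2 a)) ->
  term_coef s k t1 =1 term_coef s k t2.
Proof.
move=> xgen x12 q; apply/eqP/negP => /negP c12.
suff : dot (generic_form (inr (s, k, t1, t2))) x != 0.
  by rewrite /= dotBl !dot_term_form x12 subrr eqxx.
by apply: xgen; exists q; rewrite /term_form subr_eq0 eqr_nat.
Qed.

End Genericity.

Arguments generic_form {R n}.

Section Porbits.
Variables (T : finType) (t : {perm T}).

Lemma porbit_fix (b : T) : t b = b -> porbit t b = [set b].
Proof.
move=> tb; apply/setP => y; rewrite inE; apply/porbitP/eqP => [[j ->]|->].
  by rewrite permX iter_fix.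
by exists 0%N; rewrite expg0 perm1.
Qed.

Lemma porbit_mem_perm (a b : T) : (t b \in porbit t a) = (b \in porbit t a).
Proof. by rewrite -!eq_porbit_mem -(porbit_perm t 1 b) expg1. Qed.

Lemma perm_fix_porbit (a : T) :
  exists t' : {perm T}, forall b, t' b = if b \in porbit t a then b else t b.
Proof.
pose f b := if b \in porbit t a then b else t b.
have f_inj : injective f.
  move=> b1 b2; rewrite /f; case: ifP => b1a; case: ifP => b2a //.
  - by move=> e; move: b1a; rewrite e porbit_mem_perm b2a.
  - by move=> e; move: b2a; rewrite -e porbit_mem_perm b1a.
  - exact: perm_inj.
by exists (perm f_inj) => b; rewrite permE.
Qed.

Lemma sum_porbit_perm (V : nmodType) (a : T) (F : T -> V) :
  \sum_(b in porbit t a) F (t b) = \sum_(b in porbit t a) F b.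
Proof.
by rewrite [RHS](reindex_inj (@perm_inj _ t)); apply: eq_bigl => b; rewrite porbit_mem_perm.
Qed.

End Porbits.

Section LiftPerm.
Variable m : nat.

Lemma big_neq_lift (V : Type) (idx : V) (op : Monoid.com_law idx)
    (k : 'I_m.+1) (F : 'I_m.+1 -> V) :
  \big[op/idx]_(a | a != k) F a = \big[op/idx]_(r < m) F (lift k r).
Proof.
rewrite big_mkcond (bigD1_ord k) //= eqxx Monoid.mul1m.
by apply: eq_bigr => r _; rewrite eq_sym neq_lift.
Qed.

Lemma lift_perm_surj (k i : 'I_m.+1) (t : 'S_m.+1) :
  t k = i -> exists sg : 'S_m, lift_perm k i sg = t.
Proof.
move=> tk; pose f (r : 'I_m) := odflt r (unlift i (t (lift k r))).
have fK r : lift i (f r) = t (lift k r).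
  have : i != t (lift k r) by rewrite -tk (inj_eq perm_inj) neq_lift.
  by rewrite /f; case/unlift_some => r' -> ->.
have f_inj : injective f.
  by move=> r1 r2 /(congr1 (lift i)); rewrite !fK => /perm_inj /lift_inj.
exists (perm f_inj); apply/permP => a.
case: (unliftP k a) => [r ->|->]; last by rewrite lift_perm_id tk.
by rewrite lift_perm_lift permE fK.
Qed.

End LiftPerm.

Section MaximalTerms.
Variables (R : realType) (m : nat).
Local Notation n := m.+1.
Variables (x : pt R n) (s : 'S_n) (k i : 'I_n).
Hypothesis xK : Kstrict x.
Hypothesis xgen : generic x.
Hypothesis s_sorted : forall a b : 'I_n, (a <= b)%N ->
  x (sympair (s b) (s b)) <= x (sympair (s a) (s a)).

Definition sorted_mx : 'M[Smax R]_n := \matrix_(a, b) pos_mx x (s a) (s b).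
Definition shift_mx : 'M[Smax R]_n := sshift (sorted_mx k k) sorted_mx.
Definition shift_minor : 'M[Smax R]_m := row' k (col' i shift_mx).

Definition xdiag (a : 'I_n) : R := x (sympair (s a) (s a)).
Definition xentry (a b : 'I_n) : R := x (shift_coord s k a b).
Definition entry_neg (a b : 'I_n) : bool := ~~ ((a == b) && (k < a)%N).

Lemma xdiag_lt (a b : 'I_n) : (a < b)%N -> xdiag b < xdiag a.
Proof.
move=> ab; rewrite lt_neqAle s_sorted ?(ltnW ab) // andbT.
apply: contraTneq ab => /(generic_diag_inj xgen) /perm_inj ->.
by rewrite ltnn.
Qed.

Lemma shift_mxE (a b : 'I_n) : a != k ->
  shift_mx a b = SElt (sign_tag (entry_neg a b)) (xentry a b).
Proof.
move=> ak; rewrite /shift_mx /sshift /sorted_mx !mxE /entry_neg /xentry /shift_coord.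
have [<-|ab] /= := eqVneq a b; last by [].
case: (ltnP a k) => [lt_ak|le_ka].
  by rewrite (xdiag_lt lt_ak) ltnNge (ltnW lt_ak).
have lt_ka : (k < a)%N by rewrite ltn_neqAle le_ka eq_sym ak.
by have lt_x := xdiag_lt lt_ka; rewrite /xdiag in lt_x; rewrite ltNge (ltW lt_x) lt_x lt_ka.
Qed.

Lemma shift_minorE (r c : 'I_m) : shift_minor r c =
  SElt (sign_tag (entry_neg (lift k r) (lift i c))) (xentry (lift k r) (lift i c)).
Proof. by rewrite mxE mxE shift_mxE // eq_sym neq_lift. Qed.

Definition minor_weight (sg : 'S_m) : R :=
  \sum_(r < m) xentry (lift k r) (lift i (sg r)).

Definition minor_sign (sg : 'S_m) : bool :=
  odd_perm sg (+) odd (\sum_(r < m) entry_neg (lift k r) (lift i (sg r))).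

Lemma minor_termE (sg : 'S_m) :
  smul (ssign_pow R (odd_perm sg)) (\big[@smul R/sone R]_(r < m) shift_minor r (sg r)) =
  SElt (sign_tag (minor_sign sg)) (minor_weight sg).
Proof.
rewrite (big_smul_sign_tag (index_enum _) (P := xpredT) (fun r _ => shift_minorE r (sg r))).
by rewrite ssign_powE smul_sign_tag add0r oddb.
Qed.

Definition weight (t : 'S_n) : R := \sum_(a | a != k) xentry a (t a).

Lemma minor_weight_lift (sg : 'S_m) : minor_weight sg = weight (lift_perm k i sg).
Proof.
by rewrite /weight big_neq_lift; apply: eq_bigr => r _; rewrite lift_perm_lift.
Qed.

Lemma xentry_diag_ge (b : 'I_n) : b != k -> xdiag b <= xentry b b.
Proof. by move=> bk; rewrite /xentry /shift_coord eqxx; case: ltnP => // /s_sorted. Qed.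

Lemma xentry_offdiag_lt (b c : 'I_n) : b != c -> 2 * xentry b c < xdiag b + xdiag c.
Proof.
move=> bc; rewrite /xentry /shift_coord (negbTE bc) /xdiag -diag12_sympair.
by apply: xK; rewrite is_diag_sympair (inj_eq perm_inj).
Qed.

Lemma weight_lt_fix_porbit (t t' : 'S_n) (a : 'I_n) :
  k \notin porbit t a -> t a != a ->
  (forall b, t' b = if b \in porbit t a then b else t b) -> weight t < weight t'.
Proof.
set C := porbit t a => kC ta t'E.
have Ck b : b \in C -> b != k by apply: contraTneq => ->.
have -> : weight t' = weight t + \sum_(b in C) (xentry b b - xentry b (t b)).
  rewrite (eq_bigl (fun b => (b != k) && (b \in C))) => [|b]; last first.
    by apply/idP/andP => [bC|[]//]; rewrite Ck.
  rewrite big_mkcondr /weight -big_split /=; apply: eq_bigr => b _.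
  by rewrite t'E; case: ifP => _; rewrite ?addr0 // addrC subrK.
(* Fixing [b] gains more than [(xdiag b - xdiag (t b)) / 2], and these bounds
   telescope to [0] around the cycle. *)
have cycle0 : \sum_(b in C) (xdiag b - xdiag (t b)) / 2 = 0.
  by rewrite -mulr_suml sumrB sum_porbit_perm subrr mul0r.
rewrite ltrDl -[ltLHS]cycle0; apply: ltr_sum => [|b bC].
  by apply/hasP; exists a; rewrite ?mem_index_enum ?porbit_id.
have tb : b != t b.
  apply: contraTneq bC => tbb; rewrite -/C porbit_sym porbit_fix -?tbb // inE.
  by apply: contra ta => /eqP ->; rewrite -tbb.
by have := xentry_diag_ge (Ck _ bC); have := xentry_offdiag_lt tb; lra.
Qed.

Lemma max_term_path (sg : 'S_m) : (forall sg', minor_weight sg' <= minor_weight sg) ->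
  forall a, lift_perm k i sg a != a -> a \in porbit (lift_perm k i sg) k.
Proof.
move=> sg_max a; set t := lift_perm k i sg => ta.
rewrite porbit_sym; apply/negPn/negP => kC.
have [t' t'E] := perm_fix_porbit t a.
have [sg' sg't'] : exists sg', lift_perm k i sg' = t'.
  by apply: lift_perm_surj; rewrite t'E (negbTE kC) lift_perm_id.
have := sg_max sg'; rewrite !minor_weight_lift sg't' -/t.
by rewrite leNgt (weight_lt_fix_porbit kC ta t'E).
Qed.

Definition fixed_off (t : 'S_n) : {set 'I_n} := [set a | (a != k) && (t a == a)].

Lemma card_porbits_path (t : 'S_n) : (forall a, t a != a -> a \in porbit t k) ->
  #|porbits t| = #|fixed_off t|.+1.
Proof.
move=> t_path.
have -> : porbits t = porbit t k |: [set [set a] | a in fixed_off t].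
  apply/setP => X; rewrite in_setU1; apply/imsetP/idP.
  - case=> b _ ->; have [bk|bk] := boolP (b \in porbit t k).
      by rewrite eq_porbit_mem bk.
    have tb : t b == b := contraR (t_path b) bk.
    have bk' : b != k by apply: contraNneq bk => ->; exact: porbit_id.
    apply/orP; right; apply/imsetP; exists b; first by rewrite inE bk' tb.
    by rewrite porbit_fix // (eqP tb).
  - case/orP => [/eqP ->|/imsetP [a]]; first by exists k.
    by rewrite inE => /andP [_ /eqP ta] ->; exists a; rewrite ?porbit_fix.
rewrite cardsU1 card_imset; last exact: set1_inj.
suff -> : porbit t k \notin [set [set a] | a in fixed_off t] by [].
apply/imsetP => [[a]]; rewrite inE => /andP [ak _] ka.
by have := porbit_id t k; rewrite ka inE eq_sym (negbTE ak).
Qed.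

Lemma is_diag_shift_coord (a b : 'I_n) : is_diag (shift_coord s k a b) = (a == b).
Proof.
rewrite /shift_coord; have [->|ab] := eqVneq a b.
  by case: ifP => _; rewrite is_diag_sympair eqxx.
by rewrite is_diag_sympair (inj_eq perm_inj) (negbTE ab).
Qed.

Lemma card_fixed_off_coef (t : 'S_n) :
  #|fixed_off t| = (\sum_q is_diag q * term_coef s k t q)%N.
Proof.
have -> : #|fixed_off t| = (\sum_(a | a != k) (t a == a))%N.
  rewrite -sum1_card big_mkcond [RHS]big_mkcond /=; apply: eq_bigr => a _.
  by rewrite inE; case: (a != k); case: (t a == a).
rewrite /term_coef; under [RHS]eq_bigr do rewrite big_distrr.
rewrite [RHS]exchange_big /=; apply: eq_bigr => a _.
rewrite (bigD1 (shift_coord s k a (t a))) //= eqxx muln1 big1 ?addn0.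
  by rewrite is_diag_shift_coord eq_sym.
by move=> q /negbTE; rewrite eq_sym => ->; rewrite muln0.
Qed.

(* The only positive entries of [shift_mx] are the diagonal entries [a > k], and
   these are exactly the entries whose modulus is [gamma_k]. *)
Lemma entry_neg_coef_kk (a b : 'I_n) : a != k ->
  (entry_neg a b + (shift_coord s k a b == sympair (s k) (s k)) = 1)%N.
Proof.
move=> ak; rewrite /entry_neg /shift_coord; case: (eqVneq a b) => [_|ab] /=.
  case: (ltnP a k) => [lt_ak|le_ka].
    rewrite ltnNge (ltnW lt_ak) /=.
    by case: eqP => // /sympair_inj [] [/perm_inj ak' _]; rewrite ak' eqxx in ak.
  by rewrite ltn_neqAle le_ka eq_sym ak eqxx.
by case: eqP => // /sympair_inj [] [/perm_inj e1 /perm_inj e2]; rewrite e1 e2 eqxx in ab.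
Qed.

Lemma count_neg_coef (t : 'S_n) :
  (\sum_(a | a != k) entry_neg a (t a) + term_coef s k t (sympair (s k) (s k)) = m)%N.
Proof.
rewrite /term_coef -big_split /=.
rewrite (eq_bigr (fun=> 1%N)) => [|a ak]; last exact: entry_neg_coef_kk.
by rewrite big_neq_lift sum1_card card_ord.
Qed.

Lemma max_minor_signE (sg : 'S_m) :
  (forall sg', minor_weight sg' <= minor_weight sg) ->
  let t := lift_perm k i sg in
  minor_sign sg = odd k (+) odd i (+) (odd n (+) odd #|fixed_off t|.+1)
                  (+) odd (\sum_(a | a != k) entry_neg a (t a)).
Proof.
move=> sg_max t; rewrite /minor_sign big_neq_lift.
under [in RHS]eq_bigr do rewrite lift_perm_lift.
congr (_ (+) _); have := odd_lift_perm k i sg.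
rewrite /odd_perm card_ord (card_porbits_path (max_term_path sg_max)) => ->.
by rewrite /odd_perm card_ord; case: (odd k); case: (odd i); case: (odd m); case: odd.
Qed.

(* Genericity forces all maximal permutations to share their coefficient vector,
   from which the sign is read off. *)
Lemma max_minor_sign_eq (sg sg0 : 'S_m) :
  (forall sg', minor_weight sg' <= minor_weight sg0) ->
  minor_weight sg = minor_weight sg0 -> minor_sign sg = minor_sign sg0.
Proof.
move=> sg0_max w_eq.
have sg_max sg' : minor_weight sg' <= minor_weight sg by rewrite w_eq.
rewrite (max_minor_signE sg_max) (max_minor_signE sg0_max) /=.
set t := lift_perm k i sg; set t0 := lift_perm k i sg0.
have weight_eq : weight t = weight t0 by rewrite -!minor_weight_lift.
have coef := generic_term_coef xgen weight_eq.
have -> : #|fixed_off t| = #|fixed_off t0|.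
  by rewrite !card_fixed_off_coef; apply: eq_bigr => q _; rewrite coef.
have neg_eq := etrans (count_neg_coef t) (esym (count_neg_coef t0)).
by rewrite coef in neg_eq; rewrite (addIn neg_eq).
Qed.

Lemma sdet_shift_minor_signed : exists b v, sdet shift_minor = SElt (sign_tag b) v.
Proof.
have [sg0 sg0_max] : exists sg0, forall sg, minor_weight sg <= minor_weight sg0.
  case: (@arg_maxP _ _ 'S_m 1%g predT minor_weight) => // sg0 _ sg0_max.
  by exists sg0 => sg; exact: sg0_max.
exists (minor_sign sg0), (minor_weight sg0).
rewrite /sdet; under eq_bigr do rewrite minor_termE.
apply: big_sadd_dominant => [sg _|]; last by exists sg0; rewrite ?mem_index_enum.
have := sg0_max sg; rewrite le_eqVlt => /orP [/eqP w_eq|]; [left | by right].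
by rewrite (max_minor_sign_eq sg0_max w_eq) w_eq.
Qed.

Lemma sadj_shift_mx_signed : ssigned_nz (sadj shift_mx i k).
Proof.
have [b [v detE]] := sdet_shift_minor_signed.
by rewrite /sadj mxE -/shift_minor detE ssign_powE smul_sign_tag; case: (_ (+) _).
Qed.

End MaximalTerms.

Lemma sle_pos (R : realType) (u v : R) : sle (SElt SPlus u) (SElt SPlus v) -> u <= v.
Proof. by rewrite /sle /=; case: ltgtP. Qed.

Lemma good_eigvecs_pos_mx (R : realType) n (x : pt R n) :
  Kstrict x -> generic x -> good_eigvecs (pos_mx x).
Proof.
case: n x => [|m] x xK xgen s s_sorted /=; first by case.
move=> k i; apply: sadj_shift_mx_signed => // a b ab.
by have := s_sorted a b ab; rewrite !mxE; exact: sle_pos.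
Qed.

Lemma simple_eigs_pos_mx (R : realType) n (x : pt R n) :
  generic x -> simple_eigs (pos_mx x).
Proof. by move=> xgen a b; rewrite !mxE => -[]; exact: generic_diag_inj. Qed.

Theorem corollary5p24 (R : realType) (n : nat) :
  exists (m : nat) (cells : 'I_m -> seq (pt R n * R)),
    is_complex cells /\ support_is cells (@Ktilde R n) /\
    forall i : 'I_m, max_dim_cell cells i ->
      forall x : pt R n, interior (polyset (cells i)) x ->
        exists A : 'M[Smax R]_n,
          TPD A /\ simple_eigs A /\ good_eigvecs A /\ Phi_eq A x.
Proof.
exists _, (arr_cells (@generic_form R n)); split; first exact: arr_cells_complex.
split; first by move=> x; rewrite KtildeE; exact: arr_cells_support.
(* Lower-dimensional cells have empty interior. *)
move=> c _ x x_int; exists (pos_mx x).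
have xK := interior_arr_cell_Kstrict x_int.
have xgen : generic x := fun j => interior_arr_cell_generic x_int.
split; first exact: TPD_pos_mx.
split; first exact: simple_eigs_pos_mx.
split; first exact: good_eigvecs_pos_mx.
exact: Phi_pos_mx.
Qed.
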